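(* Let $F\colon\mathcal{B}\to\mathcal{C}$ be a lax functor of bicategories and $u\colon X\to Y$ a 1-cell in $\mathcal{C}$. Then the assignment $F\downarrow u\colon F\downarrow X\to F\downarrow Y$ given on objects by $(A,f_A)\mapsto(A,uf_A)$, on 1-cells by $(p,\theta)\mapsto(p,a^{-1}\circ(1_u*\theta))$ (with $a$ the associator of $\mathcal{C}$), and on 2-cells by $\alpha\mapsto\alpha$, is a strict functor of bicategories.
   Context: A strict functor is a lax functor whose lax constraints are identities. Lax slice $F\downarrow X$: objects $(A,f_A)$ with $A\in\mathcal{B}$, $f_A\colon FA\to X$ in $\mathcal{C}$; 1-cells $(p,\theta)\colon(A_0,f_0)\to(A_1,f_1)$ with $p\colon A_0\to A_1$ in $\mathcal{B}$ and $\theta\colon f_0\Rightarrow f_1\circ Fp$; 2-cells $\alpha\colon p_0\Rightarrow p_1$ in $\mathcal{B}$ with $(1_{f_1}*F\alpha)\circ\theta_0=\theta_1$. Identity 1-cell of $(A,f_A)$: $(1_A,(1_{f_A}*F^0_A)\circ r^{-1}_{f_A})$ where $F^0_A\colon 1_{FA}\Rightarrow F1_A$; composite of $(p_0,\theta_0)$ and $(p_1,\theta_1)$ is $(p_1p_0,(1_{f_2}*F^2_{p_1,p_0})\circ a\circ(\theta_1*1_{Fp_0})\circ\theta_0)$ with $F^2_{g,f}\colon Fg\circ Ff\Rightarrow F(gf)$; 2-cell compositions, associator and unitors come from $\mathcal{B}$. *)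

Set Implicit Arguments.
Unset Strict Implicit.

Record BicatData := {
  ob :> Type;
  hom : ob -> ob -> Type;
  cell : forall A B : ob, hom A B -> hom A B -> Type;
  id1 : forall A : ob, hom A A;
  comp1 : forall A B C : ob, hom B C -> hom A B -> hom A C;
  id2 : forall (A B : ob) (f : hom A B), cell f f;
  vcomp : forall (A B : ob) (f g h : hom A B), cell g h -> cell f g -> cell f h;
  hcomp : forall (A B C : ob) (f f' : hom A B) (g g' : hom B C),
      cell g g' -> cell f f' -> cell (comp1 g f) (comp1 g' f');
  assoc : forall (A B C D : ob) (h : hom C D) (g : hom B C) (f : hom A B),
      cell (comp1 (comp1 h g) f) (comp1 h (comp1 g f));
  assoc_inv : forall (A B C D : ob) (h : hom C D) (g : hom B C) (f : hom A B),
      cell (comp1 h (comp1 g f)) (comp1 (comp1 h g) f);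
  lunit : forall (A B : ob) (f : hom A B), cell (comp1 (id1 B) f) f;
  lunit_inv : forall (A B : ob) (f : hom A B), cell f (comp1 (id1 B) f);
  runit : forall (A B : ob) (f : hom A B), cell (comp1 f (id1 A)) f;
  runit_inv : forall (A B : ob) (f : hom A B), cell f (comp1 f (id1 A))
}.

Arguments hom {b} _ _.
Arguments cell {b A B} _ _.
Arguments id1 {b} A.
Arguments comp1 {b A B C} _ _.
Arguments id2 {b A B} f.
Arguments vcomp {b A B f g h} _ _.
Arguments hcomp {b A B C f f' g g'} _ _.
Arguments assoc {b A B C D} h g f.
Arguments assoc_inv {b A B C D} h g f.
Arguments lunit {b A B} f.
Arguments lunit_inv {b A B} f.
Arguments runit {b A B} f.
Arguments runit_inv {b A B} f.

Declare Scope bicat_scope.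
Delimit Scope bicat_scope with bicat.
Open Scope bicat_scope.
Notation "g ⊙ f" := (comp1 g f) (at level 30, right associativity) : bicat_scope.
Notation "β • α" := (vcomp β α) (at level 40, left associativity) : bicat_scope.
Notation "β ⋆ α" := (hcomp β α) (at level 35, right associativity) : bicat_scope.

Record is_bicat (C : BicatData) : Prop := {
  vassoc : forall (A B : C) (f g h k : hom A B) (γ : cell h k) (β : cell g h) (α : cell f g),
      γ • (β • α) = (γ • β) • α;
  vid_l : forall (A B : C) (f g : hom A B) (α : cell f g), id2 g • α = α;
  vid_r : forall (A B : C) (f g : hom A B) (α : cell f g), α • id2 f = α;
  hid : forall (A B D : C) (f : hom A B) (g : hom B D), id2 g ⋆ id2 f = id2 (g ⊙ f);
  interchange : forall (A B D : C) (f f' f'' : hom A B) (g g' g'' : hom B D)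
      (β : cell g g') (β' : cell g' g'') (α : cell f f') (α' : cell f' f''),
      (β' • β) ⋆ (α' • α) = (β' ⋆ α') • (β ⋆ α);
  assoc_nat : forall (A B D E : C) (f f' : hom A B) (g g' : hom B D) (h h' : hom D E)
      (γ : cell h h') (β : cell g g') (α : cell f f'),
      assoc h' g' f' • ((γ ⋆ β) ⋆ α) = (γ ⋆ (β ⋆ α)) • assoc h g f;
  assoc_iso1 : forall (A B D E : C) (h : hom D E) (g : hom B D) (f : hom A B),
      assoc_inv h g f • assoc h g f = id2 ((h ⊙ g) ⊙ f);
  assoc_iso2 : forall (A B D E : C) (h : hom D E) (g : hom B D) (f : hom A B),
      assoc h g f • assoc_inv h g f = id2 (h ⊙ (g ⊙ f));
  lunit_nat : forall (A B : C) (f f' : hom A B) (α : cell f f'),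
      lunit f' • (id2 (id1 B) ⋆ α) = α • lunit f;
  lunit_iso1 : forall (A B : C) (f : hom A B), lunit_inv f • lunit f = id2 (id1 B ⊙ f);
  lunit_iso2 : forall (A B : C) (f : hom A B), lunit f • lunit_inv f = id2 f;
  runit_nat : forall (A B : C) (f f' : hom A B) (α : cell f f'),
      runit f' • (α ⋆ id2 (id1 A)) = α • runit f;
  runit_iso1 : forall (A B : C) (f : hom A B), runit_inv f • runit f = id2 (f ⊙ id1 A);
  runit_iso2 : forall (A B : C) (f : hom A B), runit f • runit_inv f = id2 f;
  pentagon : forall (A B D E G : C) (f : hom A B) (g : hom B D) (h : hom D E) (k : hom E G),
      (id2 k ⋆ assoc h g f) • assoc k (h ⊙ g) f • (assoc k h g ⋆ id2 f)
      = assoc k h (g ⊙ f) • assoc (k ⊙ h) g f;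
  triangle : forall (A B D : C) (f : hom A B) (g : hom B D),
      (id2 g ⋆ lunit f) • assoc g (id1 B) f = runit g ⋆ id2 f
}.

Record LaxData (B C : BicatData) := {
  fob : B -> C;
  fhom : forall A A' : B, hom A A' -> hom (fob A) (fob A');
  fcell : forall (A A' : B) (f g : hom A A'), cell f g -> cell (fhom f) (fhom g);
  fid : forall A : B, cell (id1 (fob A)) (fhom (id1 A));
  fcomp : forall (A A' A'' : B) (g : hom A' A'') (f : hom A A'),
      cell (fhom g ⊙ fhom f) (fhom (g ⊙ f))
}.
Arguments fob {B C} F _ : rename.
Arguments fhom {B C} F {A A'} _ : rename.
Arguments fcell {B C} F {A A' f g} _ : rename.
Arguments fid {B C} F A : rename.
Arguments fcomp {B C} F {A A' A''} g f : rename.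

Record is_lax (B C : BicatData) (F : LaxData B C) : Prop := {
  lax_id2 : forall (A A' : B) (f : hom A A'), fcell F (id2 f) = id2 (fhom F f);
  lax_vcomp : forall (A A' : B) (f g h : hom A A') (β : cell g h) (α : cell f g),
      fcell F (β • α) = fcell F β • fcell F α;
  lax_nat : forall (A A' A'' : B) (f f' : hom A A') (g g' : hom A' A'')
      (β : cell g g') (α : cell f f'),
      fcell F (β ⋆ α) • fcomp F g f = fcomp F g' f' • (fcell F β ⋆ fcell F α);
  lax_assoc : forall (A A' A'' A''' : B) (f : hom A A') (g : hom A' A'') (h : hom A'' A'''),
      fcell F (assoc h g f) • fcomp F (h ⊙ g) f • (fcomp F h g ⋆ id2 (fhom F f))
      = fcomp F h (g ⊙ f) • (id2 (fhom F h) ⋆ fcomp F g f)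
        • assoc (fhom F h) (fhom F g) (fhom F f);
  lax_lunit : forall (A A' : B) (f : hom A A'),
      fcell F (lunit f) • fcomp F (id1 A') f • (fid F A' ⋆ id2 (fhom F f))
      = lunit (fhom F f);
  lax_runit : forall (A A' : B) (f : hom A A'),
      fcell F (runit f) • fcomp F f (id1 A) • (id2 (fhom F f) ⋆ fid F A)
      = runit (fhom F f)
}.

(* A strict functor: a lax functor whose lax constraints are identities
   (the 1-cells F(1_A) and 1_{FA}, resp. F(gf) and Fg Ff, coincide, and the
   constraint 2-cells are the identity 2-cells). *)
Definition is_strict (B C : BicatData) (F : LaxData B C) : Prop :=
  is_lax F /\
  (forall A : B, exists e : fhom F (id1 A) = id1 (fob F A),
      fid F A = eq_rect_r (fun x => cell (id1 (fob F A)) x) (id2 (id1 (fob F A))) e) /\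
  (forall (A A' A'' : B) (g : hom A' A'') (f : hom A A'),
      exists e : fhom F (g ⊙ f) = fhom F g ⊙ fhom F f,
      fcomp F g f = eq_rect_r (fun x => cell (fhom F g ⊙ fhom F f) x)
                      (id2 (fhom F g ⊙ fhom F f)) e).

Section BL.
Variable C : BicatData.
Variable HC : is_bicat C.

Lemma vA (A B : C) (f g h k : hom A B) (γ : cell h k) (β : cell g h) (α : cell f g) :
  (γ • β) • α = γ • (β • α).
Proof. symmetry; apply (vassoc HC). Qed.
Lemma vl (A B : C) (f g : hom A B) (α : cell f g) : id2 g • α = α.
Proof. apply (vid_l HC). Qed.
Lemma vr (A B : C) (f g : hom A B) (α : cell f g) : α • id2 f = α.
Proof. apply (vid_r HC). Qed.
Lemma tl (A B : C) (f g g' h : hom A B) (x : cell g h) (y : cell f g) (z : cell g' h) (w : cell f g') :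
  x • y = z • w -> forall (e : hom A B) (k : cell e f), x • (y • k) = z • (w • k).
Proof. intros H e k. rewrite <- !vA, H; reflexivity. Qed.
Lemma tl1 (A B : C) (f g h : hom A B) (x : cell g h) (y : cell f g) (z : cell f h) :
  x • y = z -> forall (e : hom A B) (k : cell e f), x • (y • k) = z • k.
Proof. intros H e k. rewrite <- vA, H; reflexivity. Qed.
Lemma tl3 (A B : C) (f g1 g2 g3 h : hom A B) (x : cell g2 h) (y : cell g1 g2) (z : cell f g1)
  (u : cell g3 h) (v : cell f g3) :
  x • y • z = u • v -> forall (e : hom A B) (k : cell e f), x • (y • (z • k)) = u • (v • k).
Proof. intros H e k. rewrite <- !vA, H; reflexivity. Qed.
Lemma hI (A B D : C) (f : hom A B) (g : hom B D) : id2 g ⋆ id2 f = id2 (g ⊙ f).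
Proof. apply (hid HC). Qed.
Lemma lw (A B D : C) (f f' f'' : hom A B) (g : hom B D) (α : cell f f') (α' : cell f' f'') :
  (id2 g ⋆ α') • (id2 g ⋆ α) = id2 g ⋆ (α' • α).
Proof. rewrite <- (interchange HC), vl; reflexivity. Qed.
Lemma rw (A B D : C) (f : hom A B) (g g' g'' : hom B D) (β : cell g g') (β' : cell g' g'') :
  (β' ⋆ id2 f) • (β ⋆ id2 f) = (β' • β) ⋆ id2 f.
Proof. rewrite <- (interchange HC), vl; reflexivity. Qed.
Lemma hsplit1 (A B D : C) (f f' : hom A B) (g g' : hom B D) (β : cell g g') (α : cell f f') :
  β ⋆ α = (β ⋆ id2 f') • (id2 g ⋆ α).
Proof. rewrite <- (interchange HC), vl, vr; reflexivity. Qed.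
Lemma hsplit2 (A B D : C) (f f' : hom A B) (g g' : hom B D) (β : cell g g') (α : cell f f') :
  β ⋆ α = (id2 g' ⋆ α) • (β ⋆ id2 f).
Proof. rewrite <- (interchange HC), vl, vr; reflexivity. Qed.
Lemma rcancel (A B : C) (f g : hom A B) (α β : cell f g) :
  α ⋆ id2 (id1 A) = β ⋆ id2 (id1 A) -> α = β.
Proof.
  intro H.
  rewrite <- (vr α), <- (runit_iso2 HC f), <- vA, <- (runit_nat HC), H, (runit_nat HC), vA,
    (runit_iso2 HC), vr; auto.
Qed.
Lemma acancel (A B D E : C) (h : hom D E) (g : hom B D) (f : hom A B) (Z : hom A E)
  (x y : cell Z ((h ⊙ g) ⊙ f)) : assoc h g f • x = assoc h g f • y -> x = y.
Proof.
  intro H. rewrite <- (vl x), <- (vl y), <- (assoc_iso1 HC), !vA, H; reflexivity.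
Qed.
Lemma kelly_r (A B D : C) (f : hom A B) (g : hom B D) :
  (id2 g ⋆ runit f) • assoc g f (id1 A) = runit (g ⊙ f).
Proof.
  apply rcancel. apply acancel. symmetry.
  rewrite <- (triangle HC), <- vA, <- (hI f g), (assoc_nat HC), vA, <- (pentagon HC).
  rewrite <- !vA, lw, (triangle HC).
  rewrite <- (assoc_nat HC), vA, rw. reflexivity.
Qed.
End BL.

Section Slice.
Variables B C : BicatData.
Variable HC : is_bicat C.
Variable F : LaxData B C.
Variable HF : is_lax F.
Variable HB : is_bicat B.
Variable X : C.

Record sob := mk_sob { sA : B; sf : hom (fob F sA) X }.
Record shom (a b : sob) := mk_shom { sp : hom (sA a) (sA b); sth : cell (sf a) (sf b ⊙ fhom F sp) }.
Arguments mk_shom {a b} sp sth.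
Definition scond (a b : sob) (x y : shom a b) (α : cell (sp x) (sp y)) : Prop :=
  (id2 (sf b) ⋆ fcell F α) • sth x = sth y.
Definition scell (a b : sob) (x y : shom a b) := { α : cell (sp x) (sp y) | scond α }.

Definition sid1 (a : sob) : shom a a :=
  mk_shom (id1 (sA a)) ((id2 (sf a) ⋆ fid F (sA a)) • runit_inv (sf a)).
Definition scomp1 (a b c : sob) (q : shom b c) (p : shom a b) : shom a c :=
  mk_shom (sp q ⊙ sp p)
    ((id2 (sf c) ⋆ fcomp F (sp q) (sp p)) • assoc (sf c) (fhom F (sp q)) (fhom F (sp p))
     • (sth q ⋆ id2 (fhom F (sp p))) • sth p).

Lemma cond_id2 (a b : sob) (x : shom a b) : scond (id2 (sp x)).
Proof. unfold scond. rewrite (lax_id2 HF), (hI HC), (vl HC). reflexivity. Qed.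

Lemma cond_vcomp (a b : sob) (x y z : shom a b) (β : cell (sp y) (sp z)) (α : cell (sp x) (sp y)) :
  scond β -> scond α -> scond (β • α).
Proof.
  unfold scond; intros Hb Ha.
  rewrite (lax_vcomp HF), <- (lw HC), (vA HC), Ha, Hb. reflexivity.
Qed.

Lemma cond_hcomp (a b c : sob) (x x' : shom a b) (y y' : shom b c)
  (β : cell (sp y) (sp y')) (α : cell (sp x) (sp x')) :
  scond β -> scond α -> scond (x := scomp1 y x) (y := scomp1 y' x') (β ⋆ α).
Proof.
  unfold scond; intros Hb Ha; simpl.
  rewrite !(vA HC), <- (vA HC (id2 (sf c) ⋆ fcell F (β ⋆ α))), (lw HC), (lax_nat HF), <- (lw HC), (vA HC).
  f_equal.
  rewrite <- (tl HC (assoc_nat HC _ _ _)). f_equal.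
  rewrite <- (vA HC), <- (interchange HC), Hb, (vr HC), (hsplit1 HC), (vA HC), Ha.
  reflexivity.
Qed.

Lemma cond_inv (a b : sob) (x y : shom a b) (α : cell (sp x) (sp y)) (α' : cell (sp y) (sp x)) :
  α' • α = id2 (sp x) -> scond α -> scond α'.
Proof.
  unfold scond; intros H Ha.
  rewrite <- Ha, <- (vA HC), (lw HC), <- (lax_vcomp HF), H, (lax_id2 HF), (hI HC), (vl HC).
  reflexivity.
Qed.

Lemma cond_lunit (a b : sob) (x : shom a b) :
  scond (x := scomp1 (sid1 b) x) (y := x) (lunit (sp x)).
Proof.
  unfold scond; simpl.
  rewrite <- (rw HC), !(vA HC).
  rewrite (tl HC (assoc_nat HC (id2 _) (fid F _) (id2 _))).
  rewrite (tl1 HC (lw HC _ _ _)), (tl1 HC (lw HC _ _ _)), (lax_lunit HF).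
  rewrite (tl1 HC (triangle HC _ _)), (tl1 HC (rw HC _ _ _)), (runit_iso2 HC), (hI HC), (vl HC).
  reflexivity.
Qed.

Lemma cond_runit (a b : sob) (x : shom a b) :
  scond (x := scomp1 x (sid1 a)) (y := x) (runit (sp x)).
Proof.
  unfold scond; simpl.
  rewrite !(vA HC).
  rewrite (tl1 HC (lw HC _ _ _)).
  rewrite (tl1 HC (eq_sym (hsplit1 HC (sth x) (fid F (sA a))))), (hsplit2 HC (sth x)), (vA HC).
  rewrite <- (hI HC (fhom F (sp x)) (sf b)).
  rewrite (tl HC (assoc_nat HC _ _ _)).
  rewrite (tl1 HC (lw HC _ _ _)), (lax_runit HF), (tl1 HC (kelly_r HC _ _)).
  rewrite (tl HC (runit_nat HC _)), (runit_iso2 HC), (vr HC).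
  reflexivity.
Qed.

Lemma cond_assoc (a0 a1 a2 a3 : sob) (x0 : shom a0 a1) (x1 : shom a1 a2) (x2 : shom a2 a3) :
  scond (x := scomp1 (scomp1 x2 x1) x0) (y := scomp1 x2 (scomp1 x1 x0))
    (assoc (sp x2) (sp x1) (sp x0)).
Proof.
  unfold scond; simpl.
  rewrite <- !(rw HC), !(vA HC).
  rewrite (tl HC (assoc_nat HC (id2 _) (fcomp F (sp x2) (sp x1)) (id2 _))).
  rewrite (tl1 HC (lw HC _ _ _)), (tl1 HC (lw HC _ _ _)), (lax_assoc HF).
  rewrite <- !(lw HC), !(vA HC).
  rewrite (tl3 HC (pentagon HC _ _ _ _)).
  rewrite (tl1 HC (eq_sym (hsplit1 HC (sth x2) (fcomp F (sp x1) (sp x0))))), (hsplit2 HC (sth x2) (fcomp F (sp x1) (sp x0))), (vA HC).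
  rewrite <- (hI HC (fhom F (sp x2)) (sf a3)).
  rewrite (tl HC (assoc_nat HC (id2 (sf a3)) (id2 (fhom F (sp x2))) (fcomp F (sp x1) (sp x0)))).
  rewrite <- (hI HC (fhom F (sp x0)) (fhom F (sp x1))).
  rewrite <- (tl HC (assoc_nat HC (sth x2) (id2 _) (id2 _))).
  reflexivity.
Qed.

Definition sval (a b : sob) (x y : shom a b) (α : scell x y) : cell (sp x) (sp y) := proj1_sig α.

Definition lax_slice : BicatData :=
  {| ob := sob;
     hom := shom;
     cell := fun a b (x y : shom a b) => scell x y;
     id1 := sid1;
     comp1 := fun a b c q p => scomp1 q p;
     id2 := fun a b x => exist _ (id2 (sp x)) (cond_id2 x);
     vcomp := fun a b x y z β α =>
       exist _ (proj1_sig β • proj1_sig α) (cond_vcomp (proj2_sig β) (proj2_sig α));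
     hcomp := fun a b c x x' y y' β α =>
       exist _ (proj1_sig β ⋆ proj1_sig α) (cond_hcomp (proj2_sig β) (proj2_sig α));
     assoc := fun a0 a1 a2 a3 x2 x1 x0 =>
       exist _ (assoc (sp x2) (sp x1) (sp x0)) (cond_assoc x0 x1 x2);
     assoc_inv := fun a0 a1 a2 a3 x2 x1 x0 =>
       exist _ (assoc_inv (sp x2) (sp x1) (sp x0))
         (@cond_inv _ _ (scomp1 (scomp1 x2 x1) x0) (scomp1 x2 (scomp1 x1 x0)) _ _
           (assoc_iso1 HB (sp x2) (sp x1) (sp x0)) (cond_assoc x0 x1 x2));
     lunit := fun a b x => exist _ (lunit (sp x)) (cond_lunit x);
     lunit_inv := fun a b x => exist _ (lunit_inv (sp x))
         (@cond_inv _ _ (scomp1 (sid1 b) x) x _ _ (lunit_iso1 HB (sp x)) (cond_lunit x));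
     runit := fun a b x => exist _ (runit (sp x)) (cond_runit x);
     runit_inv := fun a b x => exist _ (runit_inv (sp x))
         (@cond_inv _ _ (scomp1 x (sid1 a)) x _ _ (runit_iso1 HB (sp x)) (cond_runit x)) |}.
End Slice.


Arguments sob {B C} F X.
Arguments shom {B C F X} a b.
Arguments mk_sob {B C F X} sA sf.
Arguments mk_shom {B C F X a b} sp sth.
Arguments sval {B C F X a b x y} α.

Section SliceMap.
Variables B C : BicatData.
Variable F : LaxData B C.
Variables X Y : C.
Variable u : hom X Y.

Definition slice_map_ob (a : sob F X) : sob F Y := mk_sob (sA a) (u ⊙ sf a).
Definition slice_map_hom (a b : sob F X) (x : shom a b) :
    shom (slice_map_ob a) (slice_map_ob b) :=
  @mk_shom _ _ F Y (slice_map_ob a) (slice_map_ob b) (sp x) (assoc_inv u (sf b) (fhom F (sp x)) • (id2 u ⋆ sth x)).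
End SliceMap.
Arguments slice_map_ob {B C F X Y} u a.
Arguments slice_map_hom {B C F X Y} u {a b} x.

(* On 1-cells, F ↓ u only changes the 2-cell θ : f_A ⇒ f_B ∘ Fp, by postcomposing
   the triangle with u and reassociating.  Identities and composites of the lax slice
   are built from θ's by whiskering, unitors and associators, and postcomposition
   with u commutes with each of these (naturality of a⁻¹, Kelly's r⁻¹ identity,
   the pentagon).  So F ↓ u preserves identity and composite 1-cells on the nose,
   and its constraints can be taken to be identity 2-cells; the lax functor axioms
   then hold because F ↓ u is the identity on 2-cells. *)
From Stdlib Require Import ProofIrrelevance.
Set Implicit Arguments.
Unset Strict Implicit.

Section BicatInverses.
Variable C : BicatData.
Variable HC : is_bicat C.

Lemma iso_nat_inv (A B : C) (f g f' g' : hom A B) (a : cell f g) (ai : cell g f)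
  (a' : cell f' g') (ai' : cell g' f') (α : cell f f') (β : cell g g') :
  a • ai = id2 g -> ai' • a' = id2 f' -> a' • α = β • a -> ai' • β = α • ai.
Proof.
  intros a_ai ai'_a' nat.
  rewrite <- (vr HC (ai' • β)), <- a_ai, (vassoc HC), (vA HC ai' β a), <- nat.
  rewrite (vassoc HC ai' a' α), ai'_a', (vl HC). reflexivity.
Qed.

Lemma assoc_inv_nat (A B D E : C) (f f' : hom A B) (g g' : hom B D) (h h' : hom D E)
  (γ : cell h h') (β : cell g g') (α : cell f f') :
  assoc_inv h' g' f' • (γ ⋆ (β ⋆ α)) = ((γ ⋆ β) ⋆ α) • assoc_inv h g f.
Proof.
  eapply iso_nat_inv; [apply (assoc_iso2 HC) | apply (assoc_iso1 HC) | apply (assoc_nat HC)].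
Qed.

Lemma assoc_inv_runit_inv (A B D : C) (f : hom A B) (g : hom B D) :
  assoc_inv g f (id1 A) • (id2 g ⋆ runit_inv f) = runit_inv (g ⊙ f).
Proof.
  rewrite <- (vl HC (assoc_inv g f (id1 A) • (id2 g ⋆ runit_inv f))).
  rewrite <- (runit_iso1 HC (g ⊙ f)), <- (kelly_r HC), !(vA HC).
  rewrite <- (vA HC (assoc g f (id1 A))), (assoc_iso2 HC), (vl HC).
  rewrite (lw HC), (runit_iso2 HC), (hI HC), (vr HC). reflexivity.
Qed.

Lemma pentagon_assoc_inv (A B D E G : C) (f : hom A B) (g : hom B D) (h : hom D E)
  (k : hom E G) :
  assoc_inv k h (g ⊙ f) • (id2 k ⋆ assoc h g f)
  = assoc (k ⊙ h) g f • (assoc_inv k h g ⋆ id2 f) • assoc_inv k (h ⊙ g) f.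
Proof.
  rewrite <- (vr HC (assoc_inv k h (g ⊙ f) • (id2 k ⋆ assoc h g f))).
  rewrite <- (assoc_iso2 HC k (h ⊙ g) f), <- (vr HC (assoc k (h ⊙ g) f)).
  rewrite <- (hI HC f (k ⊙ (h ⊙ g))), <- (assoc_iso2 HC k h g), <- (rw HC), !(vA HC).
  rewrite <- (vA HC (id2 k ⋆ assoc h g f)).
  rewrite <- (vA HC (id2 k ⋆ assoc h g f • assoc k (h ⊙ g) f)), (pentagon HC).
  rewrite <- !(vA HC), (assoc_iso1 HC), (vl HC). reflexivity.
Qed.

End BicatInverses.

Section Postcomposition.
Variable C : BicatData.
Variable HC : is_bicat C.
Variables X Y : C.
Variable u : hom X Y.

(* By definition, [slice_map_hom u x] carries the 2-cell [postcomp u (sth x)]. *)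
Definition postcomp (A B : C) (h : hom A X) (f : hom B X) (g : hom A B)
  (θ : cell h (f ⊙ g)) : cell (u ⊙ h) ((u ⊙ f) ⊙ g) :=
  assoc_inv u f g • (id2 u ⋆ θ).

Lemma postcomp_nat (A B : C) (h : hom A X) (f f' : hom B X) (g g' : hom A B)
  (β : cell f f') (γ : cell g g') (θ : cell h (f ⊙ g)) :
  postcomp ((β ⋆ γ) • θ) = ((id2 u ⋆ β) ⋆ γ) • postcomp θ.
Proof.
  unfold postcomp.
  rewrite <- (lw HC), <- !(vA HC), (assoc_inv_nat HC). reflexivity.
Qed.

Lemma postcomp_runit_inv (A : C) (f : hom A X) :
  postcomp (runit_inv f) = runit_inv (u ⊙ f).
Proof. apply (assoc_inv_runit_inv HC). Qed.

Lemma postcomp_assoc (A B D : C) (h : hom A X) (f : hom D X) (g : hom B D) (k : hom A B)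
  (θ : cell h ((f ⊙ g) ⊙ k)) :
  postcomp (assoc f g k • θ) = assoc (u ⊙ f) g k • (assoc_inv u f g ⋆ id2 k) • postcomp θ.
Proof.
  unfold postcomp.
  rewrite <- (lw HC), <- (vA HC), (pentagon_assoc_inv HC), !(vA HC). reflexivity.
Qed.

End Postcomposition.

Section SliceCells.
Variables B C : BicatData.
Variable HB : is_bicat B.
Variable HC : is_bicat C.
Variable F : LaxData B C.
Variable HF : is_lax F.
Variable Z : C.

Lemma scell_eq (a b : sob F Z) (x y : shom a b) (c d : scell x y) :
  proj1_sig c = proj1_sig d -> c = d.
Proof. destruct c, d; apply subset_eq_compat. Qed.

Lemma scond_id2_of_sth_eq (a b : sob F Z) (p : hom (sA a) (sA b))
  (θ θ' : cell (sf a) (sf b ⊙ fhom F p)) :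
  θ = θ' -> scond (x := mk_shom p θ) (y := mk_shom p θ') (id2 p).
Proof.
  intros <-. unfold scond; simpl. rewrite (lax_id2 HF), (hI HC), (vl HC). reflexivity.
Qed.

(* Discharges the [eq_rect_r] conditions of [is_strict] for identity constraints. *)
Lemma scell_id2_transport (a b : sob F Z) (p : hom (sA a) (sA b))
  (θ θ' : cell (sf a) (sf b ⊙ fhom F p)) (sth_eq : θ = θ')
  (c : scell (mk_shom p θ) (mk_shom p θ')) :
  proj1_sig c = id2 p ->
  exists e : mk_shom p θ' = mk_shom p θ,
    c = eq_rect_r (fun x => cell (b := lax_slice HC HF HB Z) (mk_shom p θ) x)
          (id2 (b := lax_slice HC HF HB Z) (mk_shom p θ)) e.
Proof. subst θ'. intros c_id. exists eq_refl. apply scell_eq. exact c_id. Qed.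

End SliceCells.

Section SliceMap.
Variables B C : BicatData.
Variable HB : is_bicat B.
Variable HC : is_bicat C.
Variable F : LaxData B C.
Variable HF : is_lax F.
Variables X Y : C.
Variable u : hom X Y.

Lemma scond_slice_map (a b : sob F X) (p q : shom a b) (α : cell (sp p) (sp q)) :
  scond α -> scond (x := slice_map_hom u p) (y := slice_map_hom u q) α.
Proof.
  unfold scond; simpl; intros <-.
  fold (postcomp u (sth p)) (postcomp u ((id2 (sf b) ⋆ fcell F α) • sth p)).
  rewrite (postcomp_nat HC), (hI HC). reflexivity.
Qed.

Lemma slice_map_sid1_sth (a : sob F X) :
  sth (sid1 (slice_map_ob u a)) = sth (slice_map_hom u (sid1 a)).
Proof.
  simpl. fold (postcomp u ((id2 (sf a) ⋆ fid F (sA a)) • runit_inv (sf a))).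
  rewrite (postcomp_nat HC), (hI HC), (postcomp_runit_inv HC). reflexivity.
Qed.

Lemma slice_map_scomp1_sth (a b c : sob F X) (q : shom b c) (p : shom a b) :
  sth (scomp1 (slice_map_hom u q) (slice_map_hom u p))
  = sth (slice_map_hom u (scomp1 q p)).
Proof.
  simpl. fold (postcomp u (sth q)) (postcomp u (sth p)).
  fold (postcomp u ((id2 (sf c) ⋆ fcomp F (sp q) (sp p))
                    • assoc (sf c) (fhom F (sp q)) (fhom F (sp p))
                    • (sth q ⋆ id2 (fhom F (sp p))) • sth p)).
  rewrite !(vA HC), (postcomp_nat HC), (hI HC), (postcomp_assoc HC), (postcomp_nat HC).
  rewrite !(vA HC), <- (vA HC (assoc_inv u (sf c) (fhom F (sp q)) ⋆ _)), (rw HC).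
  reflexivity.
Qed.

Definition slice_map_cell (a b : sob F X) (p q : shom a b) (α : scell p q) :
    scell (slice_map_hom u p) (slice_map_hom u q) :=
  exist _ (proj1_sig α) (scond_slice_map (proj2_sig α)).

Definition slice_map_unitor (a : sob F X) :
    scell (sid1 (slice_map_ob u a)) (slice_map_hom u (sid1 a)) :=
  exist _ (id2 (id1 (sA a))) (scond_id2_of_sth_eq HC HF (slice_map_sid1_sth a)).

Definition slice_map_compositor (a b c : sob F X) (q : shom b c) (p : shom a b) :
    scell (scomp1 (slice_map_hom u q) (slice_map_hom u p)) (slice_map_hom u (scomp1 q p)) :=
  exist _ (id2 (sp q ⊙ sp p)) (scond_id2_of_sth_eq HC HF (slice_map_scomp1_sth q p)).

Definition slice_map : LaxData (lax_slice HC HF HB X) (lax_slice HC HF HB Y) :=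
  @Build_LaxData (lax_slice HC HF HB X) (lax_slice HC HF HB Y)
    (slice_map_ob u) (fun a b p => slice_map_hom u p)
    slice_map_cell slice_map_unitor slice_map_compositor.

Lemma slice_map_is_lax : is_lax slice_map.
Proof.
  constructor; intros; apply scell_eq; simpl;
    repeat (rewrite (vr HB) || rewrite (vl HB) || rewrite (hI HB)); reflexivity.
Qed.

Lemma slice_map_is_strict : is_strict slice_map.
Proof.
  split; [exact slice_map_is_lax | split].
  - intros a. apply (scell_id2_transport HB HC HF (slice_map_sid1_sth a)); reflexivity.
  - intros a b c q p.
    apply (scell_id2_transport HB HC HF (slice_map_scomp1_sth q p)); reflexivity.
Qed.

End SliceMap.

Theorem proposition3p3 (B C : BicatData) (HB : is_bicat B) (HC : is_bicat C)
  (F : LaxData B C) (HF : is_lax F) (X Y : C) (u : hom X Y) :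
  exists (Gc : forall (a b : lax_slice HC HF HB X) (p q : hom a b),
             cell p q -> cell (b := lax_slice HC HF HB Y) (slice_map_hom u p) (slice_map_hom u q)),
    (* on 2-cells, F ↓ u is α |-> α *)
    (forall (a b : lax_slice HC HF HB X) (p q : hom a b) (α : cell p q),
        sval (Gc a b p q α) = sval α) /\
    exists (G0 : forall a : lax_slice HC HF HB X,
               cell (@id1 (lax_slice HC HF HB Y) (slice_map_ob u a)) (slice_map_hom u (id1 a)))
           (G2 : forall (a b c : lax_slice HC HF HB X) (q : hom b c) (p : hom a b),
               cell (@comp1 (lax_slice HC HF HB Y) _ _ _ (slice_map_hom u q) (slice_map_hom u p)) (slice_map_hom u (q ⊙ p))),
      is_strict
        (@Build_LaxData (lax_slice HC HF HB X) (lax_slice HC HF HB Y)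
           (slice_map_ob u) (fun a b p => slice_map_hom u p) Gc G0 G2).
Proof.
  exists (slice_map_cell HC u).
  split; [reflexivity |].
  exists (slice_map_unitor HC HF u), (slice_map_compositor HC HF u).
  exact (slice_map_is_strict HB HC HF u).
Qed.
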